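(* Let $p>0$, $N\ge 2$, $1\le K\le N-1$, and let $\alpha_1,\dots,\alpha_N>0$ satisfy $$\sum_{j=1}^K\alpha_j^{-2/p}=\sum_{j=K+1}^N\alpha_j^{-2/p}.$$ Then there exists a one-parameter family of solutions $\Phi=(\phi_1,\dots,\phi_N)^T\in H^2_\Gamma$ of the stationary NLS equation $$-\phi_j''+\phi_j-(p+1)\alpha_j^2|\phi_j|^{2p}\phi_j=0\ \text{ on }\mathbb{R}^+,\quad j=1,\dots,N,$$ given by $$\phi_j(x)=\begin{cases}\alpha_j^{-1/p}\phi(x+a),& j=1,\dots,K,\\ \alpha_j^{-1/p}\phi(x-a),& j=K+1,\dots,N,\end{cases}$$ where $\phi(x)=\operatorname{sech}^{1/p}(px)$ and $a\in\mathbb{R}$ is arbitrary.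
   Context: $\Gamma$ is a star graph of $N$ half-lines $\mathbb{R}^+$ joined at the vertex $x=0$. $H^1_\Gamma=\{\Psi\in\oplus_{j=1}^NH^1(\mathbb{R}^+):\alpha_1^{1/p}\psi_1(0)=\dots=\alpha_N^{1/p}\psi_N(0)\}$ and $H^2_\Gamma=\{\Psi\in\oplus_{j=1}^NH^2(\mathbb{R}^+)\cap H^1_\Gamma:\sum_{j=1}^N\alpha_j^{-1/p}\psi_j'(0)=0\}$ (one-sided values at $x=0$). *)

From Stdlib Require Import Reals.
From Coquelicot Require Import Coquelicot.
Open Scope R_scope.

Definition L2_halfline (g : R -> R) : Prop :=
  ex_RInt_gen (fun x => (g x)^2) (at_right 0) (Rbar_locally p_infty).

(* Membership of f (restricted to [0,+oo)) in H^2(R^+), for functions which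
   are classically twice differentiable on (0,+oo):
   f continuous on [0,+oo), f and f' differentiable on (0,+oo),
   f, f', f'' square integrable on (0,+oo), and f' has a one-sided limit
   at 0 (the trace of f', needed for the Kirchhoff condition). *)
Definition H2_halfline (f : R -> R) : Prop :=
  (forall x, 0 <= x -> filterlim f (at_right x) (locally (f x))) /\
  (forall x, 0 < x -> ex_derive f x /\ ex_derive (Derive f) x) /\
  L2_halfline f /\ L2_halfline (Derive f) /\ L2_halfline (Derive (Derive f)).

Definition deriv_at_vertex (f : R -> R) (d : R) : Prop :=
  filterlim (Derive f) (at_right 0) (locally d).

Definition H2_Gamma (N : nat) (p : R) (alpha : nat -> R)
  (Psi : nat -> R -> R) : Prop :=
  (forall j, (j < N)%nat -> H2_halfline (Psi j)) /\
  (forall i j, (i < N)%nat -> (j < N)%nat ->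
     Rpower (alpha i) (1 / p) * Psi i 0 = Rpower (alpha j) (1 / p) * Psi j 0) /\
  exists d : nat -> R,
    (forall j, (j < N)%nat -> deriv_at_vertex (Psi j) (d j)) /\
    sum_n_m (fun j => Rpower (alpha j) (- (1 / p)) * d j) 0 (N - 1) = 0.

Definition phi_sol (p x : R) : R := Rpower (/ cosh (p * x)) (1 / p).

(* With phi(y) = cosh(p y)^(-1/p) one computes phi' = - phi tanh(p y),
   phi'' = phi (1 - (1 + p) sech^2(p y)) and phi^(2p) = sech^2(p y), so phi solves
   -phi'' + phi - (p + 1) phi^(2p+1) = 0; the factor alpha_j^(-1/p) turns this into the
   equation on edge j because (alpha_j^(-1/p))^(2p) = alpha_j^(-2).  Evenness of phi gives
   the continuity condition at the vertex, and oddness of phi' reduces the Kirchhoff sum to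
   phi'(a) (sum_(j<K) alpha_j^(-2/p) - sum_(j>=K) alpha_j^(-2/p)) = 0.  Finally
   cosh(p y) >= e^(p y) / 2 gives phi^2 <= 2^(2/p) e^(-2y), and |phi'|, |phi''| <= (1 + p) phi,
   so the L^2 integrals converge: a nonnegative integrand dominated by K e^(-k x) has a
   nondecreasing bounded primitive, hence a limit at +oo. *)

From Stdlib Require Import Reals Lra Lia Classical FunctionalExtensionality.
From Coquelicot Require Import Coquelicot.
Open Scope R_scope.

Lemma ex_derive_continuous_R (f : R -> R) (x : R) : ex_derive f x -> continuous f x.
Proof. apply (ex_derive_continuous (V := R_NormedModule)). Qed.

Lemma filterlim_at_right_continuous (f : R -> R) (x : R) :
  continuous f x -> filterlim f (at_right x) (locally (f x)).
Proof.
  intros Hf. eapply filterlim_filter_le_1; [apply filter_le_within | exact Hf].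
Qed.

Lemma is_derive_scal_shift (g : R -> R) (c b x l : R) :
  is_derive g (x + b) l -> is_derive (fun x => c * g (x + b)) x (c * l).
Proof.
  intros Hg. apply is_derive_scal.
  replace l with (scal 1 l) by (unfold scal; simpl; unfold mult; simpl; ring).
  apply (is_derive_comp g (fun x => x + b)); [exact Hg |].
  auto_derive; [exact I | ring].
Qed.

Lemma Derive_scal_shift (g g' : R -> R) (c b : R) : (forall y, is_derive g y (g' y)) ->
  Derive (fun x => c * g (x + b)) = (fun x => c * g' (x + b)).
Proof.
  intros Hg. apply functional_extensionality. intros x.
  apply is_derive_unique, is_derive_scal_shift, Hg.
Qed.

Lemma filterlim_pinfty_increasing_bounded (F : R -> R) (M : R) :
  (forall u v, 0 <= u <= v -> F u <= F v) -> (forall v, 0 <= v -> F v <= M) ->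
  exists L, filterlim F (Rbar_locally p_infty) (locally L).
Proof.
  intros Hmono Hbound.
  destruct (completeness (fun y => exists v, 0 <= v /\ y = F v)) as [L [Lub Lleast]].
  { exists M. intros y [v [hv ->]]. auto. }
  { exists (F 0), 0. split; lra. }
  exists L. apply filterlim_locally. intros eps.
  assert (Happrox : exists v0, 0 <= v0 /\ L - eps < F v0).
  { apply NNPP. intros Hno.
    assert (L <= L - eps).
    { apply Lleast. intros y [v [hv ->]]. apply Rnot_lt_le. intros Hlt. eauto. }
    pose proof (cond_pos eps). lra. }
  destruct Happrox as [v0 [hv0 Hv0]].
  exists v0. intros v Hv.
  assert (F v0 <= F v) by (apply Hmono; lra).
  assert (F v <= L) by (apply Lub; exists v; split; [lra | reflexivity]).
  apply Rabs_def1; unfold minus, plus, opp; simpl; lra.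
Qed.

Lemma RInt_exp_decay_le (K k v : R) : 0 < k -> 0 <= K -> 0 <= v ->
  RInt (fun x => K * exp (- (k * x))) 0 v <= K / k.
Proof.
  intros hk hK hv.
  assert (Hprim : is_RInt (fun x => K * exp (- (k * x))) 0 v
                    (minus (- K / k * exp (- (k * v))) (- K / k * exp (- (k * 0))))).
  { apply (is_RInt_derive (fun x => - K / k * exp (- (k * x)))).
    - intros x _. auto_derive; [exact I | field; lra].
    - intros x _. apply ex_derive_continuous_R. auto_derive. exact I. }
  rewrite (is_RInt_unique (V := R_CompleteNormedModule) _ _ _ _ Hprim).
  unfold minus, plus, opp; simpl.
  rewrite Rmult_0_r, Ropp_0, exp_0.
  assert (0 <= K / k * exp (- (k * v))).
  { apply Rmult_le_pos; [apply Rdiv_le_0_compat | apply Rlt_le, exp_pos]; lra. }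
  replace (- K / k) with (- (K / k)) by (field; lra). lra.
Qed.

Lemma ex_RInt_gen_exp_decay (f : R -> R) (K k : R) : 0 < k ->
  (forall x, continuous f x) -> (forall x, 0 <= x -> 0 <= f x <= K * exp (- (k * x))) ->
  ex_RInt_gen f (at_right 0) (Rbar_locally p_infty).
Proof.
  intros hk Hcont Hbound.
  assert (Hex : forall u v, ex_RInt f u v).
  { intros u v. apply (ex_RInt_continuous (V := R_CompleteNormedModule)).
    intros; apply Hcont. }
  set (F := fun v => RInt f 0 v).
  assert (HF : forall x, is_derive F x (f x)).
  { intros x. apply (is_derive_RInt _ _ 0); [| apply Hcont].
    apply filter_forall. intros y. apply (RInt_correct (V := R_CompleteNormedModule)), Hex. }
  assert (HK : 0 <= K).
  { destruct (Hbound 0 (Rle_refl 0)) as [H0 H1].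
    rewrite Rmult_0_r, Ropp_0, exp_0 in H1. lra. }
  assert (Hmono : forall u v, 0 <= u <= v -> F u <= F v).
  { intros u v huv. unfold F.
    rewrite <- (RInt_Chasles (V := R_CompleteNormedModule) f 0 u v) by apply Hex.
    unfold plus; simpl.
    assert (0 <= RInt f u v).
    { apply RInt_ge_0; [lra | apply Hex | intros x hx; apply Hbound; lra]. }
    lra. }
  assert (Hbounded : forall v, 0 <= v -> F v <= K / k).
  { intros v hv. eapply Rle_trans; [| apply (RInt_exp_decay_le K k v); assumption].
    apply RInt_le; [assumption | apply Hex | |].
    - apply (ex_RInt_continuous (V := R_CompleteNormedModule)). intros x _.
      apply ex_derive_continuous_R. auto_derive. exact I.
    - intros x hx. apply Hbound. lra. }
  destruct (filterlim_pinfty_increasing_bounded F (K / k) Hmono Hbounded) as [L HL].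
  exists (L - F 0).
  apply (is_RInt_gen_ext (Derive F)).
  { apply filter_forall. intros ab x _. apply is_derive_unique, HF. }
  apply is_RInt_gen_Derive; [apply filter_forall .. | | exact HL].
  - intros ab x _. eexists. apply HF.
  - intros ab x _. apply (continuous_ext f).
    + intros y. symmetry. apply is_derive_unique, HF.
    + apply Hcont.
  - apply filterlim_at_right_continuous, ex_derive_continuous_R. eexists. apply HF.
Qed.

Lemma L2_halfline_exp_decay (f : R -> R) (K : R) :
  (forall x, continuous f x) -> (forall x, 0 <= x -> f x ^ 2 <= K * exp (- (2 * x))) ->
  L2_halfline f.
Proof.
  intros Hf Hbound. apply (ex_RInt_gen_exp_decay _ K 2); [lra | |].
  - intros x. apply (continuous_comp f (fun y => y ^ 2)); [apply Hf |].
    apply ex_derive_continuous_R. auto_derive. exact I.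
  - intros x hx. split; [apply pow2_ge_0 | apply Hbound, hx].
Qed.

Lemma H2_halfline_exp_decay (f f1 f2 : R -> R) (K : R) :
  (forall x, is_derive f x (f1 x)) -> (forall x, is_derive f1 x (f2 x)) ->
  (forall x, continuous f2 x) ->
  (forall x, 0 <= x -> f x ^ 2 <= K * exp (- (2 * x)) /\ f1 x ^ 2 <= K * exp (- (2 * x))
                       /\ f2 x ^ 2 <= K * exp (- (2 * x))) ->
  H2_halfline f.
Proof.
  intros Hf Hf1 Hf2 Hbound.
  assert (Df : Derive f = f1).
  { apply functional_extensionality. intros x. apply is_derive_unique, Hf. }
  assert (Df1 : Derive f1 = f2).
  { apply functional_extensionality. intros x. apply is_derive_unique, Hf1. }
  assert (Cf : forall x, continuous f x).
  { intros x. apply ex_derive_continuous_R. eexists. apply Hf. }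
  assert (Cf1 : forall x, continuous f1 x).
  { intros x. apply ex_derive_continuous_R. eexists. apply Hf1. }
  unfold H2_halfline. rewrite Df, Df1. repeat split.
  - intros x _. apply filterlim_at_right_continuous, Cf.
  - eexists. apply Hf.
  - eexists. apply Hf1.
  - apply (L2_halfline_exp_decay f K Cf). intros x hx. apply Hbound, hx.
  - apply (L2_halfline_exp_decay f1 K Cf1). intros x hx. apply Hbound, hx.
  - apply (L2_halfline_exp_decay f2 K Hf2). intros x hx. apply Hbound, hx.
Qed.

Lemma sq_scal_shift_le (g : R -> R) (K c b x : R) :
  (forall y, g y ^ 2 <= K * exp (- (2 * y))) ->
  (c * g (x + b)) ^ 2 <= c ^ 2 * K * exp (- (2 * b)) * exp (- (2 * x)).
Proof.
  intros Hg.
  replace (c ^ 2 * K * exp (- (2 * b)) * exp (- (2 * x)))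
    with (c ^ 2 * (K * exp (- (2 * (x + b)))))
    by (rewrite <- Rmult_assoc, !Rmult_assoc, <- exp_plus; f_equal; f_equal; f_equal; ring).
  replace ((c * g (x + b)) ^ 2) with (c ^ 2 * g (x + b) ^ 2) by ring.
  apply Rmult_le_compat_l; [apply pow2_ge_0 | apply Hg].
Qed.

Lemma cosh_pos (y : R) : 0 < cosh y.
Proof. unfold cosh. pose proof (exp_pos y). pose proof (exp_pos (- y)). lra. Qed.

Lemma cosh_sq_sub_sinh_sq (y : R) : cosh y ^ 2 - sinh y ^ 2 = 1.
Proof.
  unfold cosh, sinh. rewrite exp_Ropp. pose proof (exp_pos y). field. lra.
Qed.

Lemma cosh_ge_1 (y : R) : 1 <= cosh y.
Proof. pose proof (cosh_sq_sub_sinh_sq y). pose proof (cosh_pos y). nra. Qed.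

Lemma inv_cosh_sq_bounds (y : R) : 0 < / cosh y ^ 2 <= 1.
Proof.
  pose proof (cosh_ge_1 y). split.
  - apply Rinv_0_lt_compat. nra.
  - rewrite <- Rinv_1. apply Rinv_le_contravar; nra.
Qed.

Lemma tanh_sq (y : R) : tanh y ^ 2 = 1 - / cosh y ^ 2.
Proof.
  pose proof (cosh_sq_sub_sinh_sq y). pose proof (cosh_pos y).
  unfold tanh.
  transitivity (sinh y ^ 2 / cosh y ^ 2); [field; lra |].
  replace (sinh y ^ 2) with (cosh y ^ 2 - 1) by lra. field. lra.
Qed.

Lemma is_derive_tanh_scaled (p y : R) :
  is_derive (fun y => tanh (p * y)) y (p / cosh (p * y) ^ 2).
Proof.
  pose proof (exp_pos (p * y)). pose proof (cosh_pos (p * y)) as Hc.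
  unfold tanh, sinh, cosh in *. auto_derive; rewrite !exp_Ropp in *;
    revert H Hc; generalize (exp (p * y)); intros A HA Hc; unfold Rdiv in Hc.
  - lra.
  - assert (A + / A <> 0) by lra. field. split; nra.
Qed.

Lemma Rpower_mul_Rpower_opp (x e : R) : 0 < x -> Rpower x e * Rpower x (- e) = 1.
Proof. intros hx. rewrite <- Rpower_plus, Rplus_opp_r. apply Rpower_O, hx. Qed.

Lemma Rpower_opp_inv_2p (x p : R) : 0 < x -> p <> 0 ->
  Rpower (Rpower x (- (1 / p))) (2 * p) = / x ^ 2.
Proof.
  intros hx hp. rewrite Rpower_mult.
  replace (- (1 / p) * (2 * p)) with (- INR 2) by (simpl; field; exact hp).
  rewrite Rpower_Ropp, Rpower_pow by exact hx. reflexivity.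
Qed.

Definition dphi_sol (p y : R) : R := - phi_sol p y * tanh (p * y).
Definition d2phi_sol (p y : R) : R := phi_sol p y * (1 - (1 + p) / cosh (p * y) ^ 2).

Lemma phi_sol_exp (p y : R) : phi_sol p y = exp (- (1 / p) * ln (cosh (p * y))).
Proof.
  unfold phi_sol, Rpower. rewrite ln_Rinv by apply cosh_pos. f_equal. ring.
Qed.

Lemma phi_sol_pos (p y : R) : 0 < phi_sol p y.
Proof. rewrite phi_sol_exp. apply exp_pos. Qed.

Lemma phi_sol_even (p y : R) : phi_sol p (- y) = phi_sol p y.
Proof.
  unfold phi_sol, cosh. replace (p * - y) with (- (p * y)) by ring.
  rewrite Ropp_involutive, Rplus_comm. reflexivity.
Qed.

Lemma dphi_sol_odd (p y : R) : dphi_sol p (- y) = - dphi_sol p y.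
Proof.
  unfold dphi_sol, tanh. rewrite phi_sol_even.
  replace (p * - y) with (- (p * y)) by ring.
  unfold sinh, cosh. rewrite Ropp_involutive. field.
  pose proof (cosh_pos (p * y)) as H. unfold cosh in H. lra.
Qed.

Lemma is_derive_phi_sol (p y : R) : p <> 0 -> is_derive (phi_sol p) y (dphi_sol p y).
Proof.
  intros hp.
  apply (is_derive_ext (fun y => exp (- (1 / p) * ln (cosh (p * y))))).
  { intros; symmetry; apply phi_sol_exp. }
  pose proof (cosh_pos (p * y)) as Hc.
  unfold dphi_sol, tanh. rewrite phi_sol_exp. unfold cosh, sinh in *.
  auto_derive; [exact Hc |]. unfold Rdiv in *.
  generalize (exp (- (1 * / p) * ln ((exp (p * y) + exp (- (p * y))) * / 2))).
  intros E. field. lra.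
Qed.

Lemma is_derive_dphi_sol (p y : R) : p <> 0 -> is_derive (dphi_sol p) y (d2phi_sol p y).
Proof.
  intros hp.
  replace (d2phi_sol p y)
    with (- dphi_sol p y * tanh (p * y) + - phi_sol p y * (p / cosh (p * y) ^ 2)).
  - apply (is_derive_mult (fun y => - phi_sol p y) (fun y => tanh (p * y))).
    + apply (is_derive_opp (phi_sol p)), is_derive_phi_sol, hp.
    + apply is_derive_tanh_scaled.
    + intros; apply Rmult_comm.
  - pose proof (cosh_pos (p * y)). unfold d2phi_sol, dphi_sol.
    transitivity (phi_sol p y * (tanh (p * y) ^ 2 - p / cosh (p * y) ^ 2)); [ring |].
    rewrite tanh_sq. field. lra.
Qed.

Lemma ex_derive_d2phi_sol (p y : R) : p <> 0 -> ex_derive (d2phi_sol p) y.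
Proof.
  intros hp. apply (ex_derive_mult (phi_sol p) (fun y => 1 - (1 + p) / cosh (p * y) ^ 2)).
  - eexists. apply is_derive_phi_sol, hp.
  - pose proof (cosh_pos (p * y)) as Hc. unfold cosh, Rdiv in *. auto_derive. nra.
Qed.

Lemma Rpower_phi_sol (p y e : R) : Rpower (phi_sol p y) e = Rpower (/ cosh (p * y)) (e / p).
Proof. unfold phi_sol. rewrite Rpower_mult. f_equal. unfold Rdiv. ring. Qed.

Lemma Rpower_phi_sol_2p (p y : R) : p <> 0 ->
  Rpower (phi_sol p y) (2 * p) = / cosh (p * y) ^ 2.
Proof.
  intros hp. rewrite Rpower_phi_sol.
  replace (2 * p / p) with (INR 2) by (simpl; field; exact hp).
  rewrite Rpower_pow by (apply Rinv_0_lt_compat, cosh_pos).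
  rewrite pow_inv. reflexivity.
Qed.

Lemma phi_sol_ode (p y : R) : p <> 0 ->
  - d2phi_sol p y + phi_sol p y - (p + 1) * Rpower (phi_sol p y) (2 * p) * phi_sol p y = 0.
Proof.
  intros hp. rewrite Rpower_phi_sol_2p by exact hp. unfold d2phi_sol.
  pose proof (cosh_pos (p * y)). field. lra.
Qed.

Lemma phi_sol_sq_le (p y : R) : 0 < p ->
  phi_sol p y ^ 2 <= Rpower 2 (2 / p) * exp (- (2 * y)).
Proof.
  intros hp.
  pose proof (exp_pos (p * y)). pose proof (cosh_pos (p * y)).
  assert (Hsech : / cosh (p * y) <= 2 * exp (- (p * y))).
  { replace (2 * exp (- (p * y))) with (/ (exp (p * y) / 2))
      by (rewrite exp_Ropp; field; lra).
    apply Rinv_le_contravar; [lra |].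
    unfold cosh. pose proof (exp_pos (- (p * y))). lra. }
  rewrite <- Rpower_pow by apply phi_sol_pos. rewrite Rpower_phi_sol.
  eapply Rle_trans.
  - apply Rle_Rpower_l; [| split; [apply Rinv_0_lt_compat |]; eassumption].
    simpl. apply Rdiv_le_0_compat; lra.
  - rewrite <- Rpower_mult_distr by (try apply exp_pos; lra).
    unfold Rpower at 2. rewrite ln_exp. right. simpl. f_equal. f_equal. field. lra.
Qed.

Lemma dphi_sol_sq_le (p y : R) : dphi_sol p y ^ 2 <= phi_sol p y ^ 2.
Proof.
  pose proof (inv_cosh_sq_bounds (p * y)). pose proof (pow2_ge_0 (phi_sol p y)).
  replace (dphi_sol p y ^ 2) with (phi_sol p y ^ 2 * tanh (p * y) ^ 2)
    by (unfold dphi_sol; ring).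
  rewrite tanh_sq. nra.
Qed.

Lemma d2phi_sol_sq_le (p y : R) : 0 < p -> d2phi_sol p y ^ 2 <= (1 + p) ^ 2 * phi_sol p y ^ 2.
Proof.
  intros hp. pose proof (inv_cosh_sq_bounds (p * y)). pose proof (pow2_ge_0 (phi_sol p y)).
  unfold d2phi_sol. unfold Rdiv. set (t := / cosh (p * y) ^ 2) in *.
  assert ((1 - (1 + p) * t) ^ 2 <= (1 + p) ^ 2).
  { assert (0 <= p + (1 + p) * t) by nra. assert (0 <= 2 + p - (1 + p) * t) by nra. nra. }
  replace ((phi_sol p y * (1 - (1 + p) * t)) ^ 2)
    with (phi_sol p y ^ 2 * (1 - (1 + p) * t) ^ 2) by ring.
  rewrite (Rmult_comm ((1 + p) ^ 2)). apply Rmult_le_compat_l; assumption.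
Qed.

Lemma phi_sol_derivs_sq_le (p y : R) : 0 < p ->
  let K := (1 + p) ^ 2 * Rpower 2 (2 / p) in
  phi_sol p y ^ 2 <= K * exp (- (2 * y)) /\ dphi_sol p y ^ 2 <= K * exp (- (2 * y))
  /\ d2phi_sol p y ^ 2 <= K * exp (- (2 * y)).
Proof.
  intros hp K.
  pose proof (phi_sol_sq_le p y hp). pose proof (dphi_sol_sq_le p y).
  pose proof (d2phi_sol_sq_le p y hp).
  assert (1 <= (1 + p) ^ 2) by nra.
  assert (0 < Rpower 2 (2 / p) * exp (- (2 * y))) by (apply Rmult_lt_0_compat; apply exp_pos).
  unfold K. rewrite Rmult_assoc. repeat split; nra.
Qed.

Lemma H2_halfline_phi_sol_shift (p c b : R) : 0 < p ->
  H2_halfline (fun x => c * phi_sol p (x + b)).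
Proof.
  intros hp. set (K := (1 + p) ^ 2 * Rpower 2 (2 / p)).
  apply (H2_halfline_exp_decay _ (fun x => c * dphi_sol p (x + b))
           (fun x => c * d2phi_sol p (x + b)) (c ^ 2 * K * exp (- (2 * b)))).
  - intros x. apply is_derive_scal_shift, is_derive_phi_sol. lra.
  - intros x. apply is_derive_scal_shift, is_derive_dphi_sol. lra.
  - intros x. apply ex_derive_continuous_R.
    destruct (ex_derive_d2phi_sol p (x + b)) as [l Hl]; [lra |].
    exists (c * l). apply is_derive_scal_shift, Hl.
  - intros x _.
    repeat split; apply sq_scal_shift_le; intros y; apply (phi_sol_derivs_sq_le p y hp).
Qed.

Lemma deriv_at_vertex_phi_sol_shift (p c b : R) : 0 < p ->
  deriv_at_vertex (fun x => c * phi_sol p (x + b)) (c * dphi_sol p b).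
Proof.
  intros hp. unfold deriv_at_vertex.
  rewrite (Derive_scal_shift _ (dphi_sol p)) by (intros; apply is_derive_phi_sol; lra).
  replace (c * dphi_sol p b) with (c * dphi_sol p (0 + b)) by (rewrite Rplus_0_l; reflexivity).
  apply (filterlim_at_right_continuous (fun x => c * dphi_sol p (x + b))).
  apply ex_derive_continuous_R. eexists.
  apply is_derive_scal_shift, is_derive_dphi_sol. lra.
Qed.

Lemma phi_sol_shift_ode (p al b x : R) : 0 < p -> 0 < al ->
  let f := fun x => Rpower al (- (1 / p)) * phi_sol p (x + b) in
  - Derive (Derive f) x + f x - (p + 1) * al ^ 2 * Rpower (Rabs (f x)) (2 * p) * f x = 0.
Proof.
  intros hp hal f. unfold f.
  rewrite (Derive_scal_shift _ (dphi_sol p)) by (intros; apply is_derive_phi_sol; lra).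
  rewrite (Derive_scal_shift _ (d2phi_sol p)) by (intros; apply is_derive_dphi_sol; lra).
  set (c := Rpower al (- (1 / p))). set (y := x + b).
  assert (hc : 0 < c) by apply exp_pos.
  pose proof (phi_sol_pos p y).
  rewrite Rabs_pos_eq by (apply Rmult_le_pos; lra).
  rewrite <- Rpower_mult_distr by assumption.
  unfold c at 3. rewrite Rpower_opp_inv_2p by lra.
  transitivity (c * (- d2phi_sol p y + phi_sol p y
                     - (p + 1) * Rpower (phi_sol p y) (2 * p) * phi_sol p y)).
  - field. lra.
  - rewrite phi_sol_ode by lra. ring.
Qed.

Lemma sum_n_m_split_opp (w : nat -> R) (d : R) (K N : nat) :
  (1 <= K <= N)%nat -> sum_n_m w 0 (K - 1) = sum_n_m w K (N - 1) ->
  sum_n_m (fun j => if (j <? K)%nat then w j * d else w j * - d) 0 (N - 1) = 0.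
Proof.
  intros hK hw.
  rewrite (sum_n_m_Chasles _ 0 (K - 1) (N - 1)) by lia.
  replace (S (K - 1)) with K by lia.
  rewrite (sum_n_m_ext_loc _ (fun j => mult (w j) d) 0 (K - 1)).
  2: { intros j hj. replace (j <? K)%nat with true by (symmetry; apply Nat.ltb_lt; lia).
       reflexivity. }
  rewrite (sum_n_m_ext_loc _ (fun j => mult (w j) (- d)) K (N - 1)).
  2: { intros j hj. replace (j <? K)%nat with false by (symmetry; apply Nat.ltb_ge; lia).
       reflexivity. }
  rewrite !sum_n_m_mult_r. unfold plus, mult; simpl.
  assert (Hcancel : forall u v : R, u = v -> u * d + v * - d = 0) by (intros u v ->; ring).
  apply Hcancel, hw.
Qed.

Lemma kirchhoff_sum_dphi_sol (alpha : nat -> R) (p a : R) (K N : nat) :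
  (1 <= K <= N)%nat ->
  sum_n_m (fun j => Rpower (alpha j) (- (2 / p))) 0 (K - 1)
  = sum_n_m (fun j => Rpower (alpha j) (- (2 / p))) K (N - 1) ->
  sum_n_m (fun j => Rpower (alpha j) (- (1 / p))
                    * (Rpower (alpha j) (- (1 / p))
                       * dphi_sol p (if (j <? K)%nat then a else - a)))
    0 (N - 1) = 0.
Proof.
  intros hK hsum.
  etransitivity; [| apply (sum_n_m_split_opp _ (dphi_sol p a) K N hK hsum)].
  apply sum_n_m_ext. intros j.
  rewrite <- Rmult_assoc, <- Rpower_plus.
  replace (- (1 / p) + - (1 / p)) with (- (2 / p)) by (unfold Rdiv; ring).
  destruct (j <? K)%nat; [| rewrite dphi_sol_odd]; reflexivity.
Qed.

Theorem lemma3p1 (p : R) (N K : nat) (alpha : nat -> R)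
  (hp : 0 < p) (hN : (2 <= N)%nat) (hK1 : (1 <= K)%nat) (hK2 : (K <= N - 1)%nat)
  (halpha : forall j, (j < N)%nat -> 0 < alpha j)
  (hsum : sum_n_m (fun j => Rpower (alpha j) (- (2 / p))) 0 (K - 1)
        = sum_n_m (fun j => Rpower (alpha j) (- (2 / p))) K (N - 1)) :
  forall a : R,
    let Phi : nat -> R -> R := fun j x =>
      if (j <? K)%nat
      then Rpower (alpha j) (- (1 / p)) * phi_sol p (x + a)
      else Rpower (alpha j) (- (1 / p)) * phi_sol p (x - a) in
    H2_Gamma N p alpha Phi /\
    (forall j, (j < N)%nat -> forall x, 0 < x ->
       - Derive (Derive (Phi j)) x + Phi j x
       - (p + 1) * (alpha j)^2 * Rpower (Rabs (Phi j x)) (2 * p) * Phi j x = 0).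
Proof.
  intros a Phi.
  set (c := fun j => Rpower (alpha j) (- (1 / p))).
  set (b := fun j => if (j <? K)%nat then a else - a).
  assert (HPhi : forall j, Phi j = fun x => c j * phi_sol p (x + b j)).
  { intros j. unfold Phi, c, b. destruct (j <? K)%nat; reflexivity. }
  assert (Hvertex : forall i, (i < N)%nat -> Rpower (alpha i) (1 / p) * Phi i 0 = phi_sol p a).
  { intros i hi. rewrite HPhi, Rplus_0_l, <- Rmult_assoc, Rpower_mul_Rpower_opp, Rmult_1_l
      by apply halpha, hi.
    unfold b. destruct (i <? K)%nat; [| apply phi_sol_even]; reflexivity. }
  split; [split; [| split] |].
  - intros j _. rewrite HPhi. apply H2_halfline_phi_sol_shift, hp.
  - intros i j hi hj. rewrite (Hvertex i hi), (Hvertex j hj). reflexivity.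
  - exists (fun j => c j * dphi_sol p (b j)). split.
    + intros j _. rewrite HPhi. apply deriv_at_vertex_phi_sol_shift, hp.
    + apply kirchhoff_sum_dphi_sol; [lia | exact hsum].
  - intros j hj x _. rewrite HPhi. apply phi_sol_shift_ode, halpha, hj. exact hp.
Qed.
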